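(* Let $1\le i,j\le p$ and $e,e'\in\mathbb{F}_p$. Suppose $\varphi\colon B_{i,e}\to B_{j,e'}$ is a surjective group homomorphism compatible with the projections of both groups onto $G$ (so its kernel lies in the normal subgroup $A/A_i$ and it restricts to a $G$-equivariant surjection $A/A_i\to A/A_j$). Then $i>j$, $e'=0$, and $\ker\varphi=A_j/A_i$. Conversely, for every $i>j\ge1$ and every $e\in\mathbb{F}_p$, the quotient of $B_{i,e}$ by $A_j/A_i$ is $B_{j,0}$, giving such a surjection $B_{i,e}\to B_{j,0}$.
   Context: $p$ is an odd prime and $G=\langle\sigma\rangle$ is cyclic of order $p$. $A=\bigoplus_{k=0}^{p-1}\mathbb{F}_p\tau^k$ is the free $\mathbb{F}_p[G]$-module on $\tau$ with $\sigma$ acting by multiplication by $\tau$; for $1\le i<p$, $A_i$ is the $\mathbb{F}_p$-span of $(\tau-1)^k$, $i\le k\le p-1$, and $A_p=0$. For $1\le i\le p$ and $e\in\mathbb{F}_p$, $B_{i,e}$ denotes the group extension $1\to A/A_i\to B_{i,e}\to G\to1$ (with $A/A_i$ written additively as a normal subgroup) in which conjugation by a lift $\tilde\sigma$ of $\sigma$ acts on $A/A_i$ as multiplication by $\tau$ and $\tilde\sigma^p=e\,\overline{(\tau-1)}^{\,i-1}$; this determines $B_{i,e}$ up to equivalence. $B_{i,0}=(A/A_i)\rtimes G$. *)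

From HB Require Import structures.
From mathcomp Require Import all_boot all_order all_algebra.

Import GRing.Theory.
Local Open Scope ring_scope.

(* A = F_p[tau] (tau^p = 1) ; since (tau-1)^p = tau^p - 1 in char p and
   A_i is the ideal spanned by (tau-1)^k, k >= i, we have
   A/A_i = F_p[tau]/((tau-1)^i).  An element of A/A_i is represented by its
   canonical representative: the remainder modulo ('X - 1)^i, i.e. a
   polynomial (in tau = 'X) of size <= i. *)
Definition Arep (p i : nat) := {a : {poly 'F_p} | (size a <= i)%N}.

Definition modA (p i : nat) (q : {poly 'F_p}) : {poly 'F_p} := q %% ('X - 1) ^+ i.

Lemma size_modA p i q : (size (modA p i q) <= i)%N.
Proof.
rewrite /modA -polyC1.
have nz : ('X - (1 : 'F_p)%:P) ^+ i != 0.
  by rewrite expf_neq0 // polyXsubC_eq0.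
by have := ltn_modp q (('X - (1 : 'F_p)%:P) ^+ i); rewrite nz size_exp_XsubC ltnS.
Qed.

Definition toA p i (q : {poly 'F_p}) : Arep p i := exist _ (modA p i q) (size_modA p i q).

(* Carrier of B_{i,e}: the pair (a, k) stands for a * sigma~^k,
   with a in A/A_i and k in Z/p = G. *)
Definition Bgrp (p i : nat) := (Arep p i * 'Z_p)%type.

(* sigma~^p = e (tau - 1)^(i-1) *)
Definition tw p i (e : 'F_p) : {poly 'F_p} := e%:P * ('X - 1) ^+ i.-1.

(* (a sigma~^k)(b sigma~^l) = (a + tau^k b) sigma~^(k+l), and
   sigma~^(k+l) = sigma~^p sigma~^(k+l-p) when k + l >= p. *)
Definition mulB p i (e : 'F_p) (x y : Bgrp p i) : Bgrp p i :=
  (toA p i (val x.1 + 'X ^+ (x.2 : nat) * val y.1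
            + (if (p <= x.2 + y.2)%N then tw p i e else 0)),
   x.2 + y.2).

Definition oneB p i : Bgrp p i := (toA p i 0, 0).

Definition ghom (p i j : nat) (e e' : 'F_p) (f : Bgrp p i -> Bgrp p j) :=
  forall x y, f (mulB p i e x y) = mulB p j e' (f x) (f y).

Definition surj {X Y : Type} (f : X -> Y) := forall y, exists x, f x = y.

Definition overG (p i j : nat) (f : Bgrp p i -> Bgrp p j) := forall x, (f x).2 = x.2.

Definition inAjAi (p i j : nat) (x : Bgrp p i) : Prop :=
  x.2 = 0 /\ (('X - 1) ^+ j %| val x.1).

From mathcomp Require Import all_boot all_order all_algebra.
Import GRing.Theory.
Local Open Scope ring_scope.

(* A surjection [phi : B_{i,e} -> B_{j,e'}] over [G] restricts to an additive
   map [A/A_i -> A/A_j] commuting with conjugation by the lift of [sigma], that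
   is with multiplication by [tau]; so it is multiplication by [u = phi(1)],
   and surjectivity makes [u] a unit modulo [(tau - 1)^j].  Hence
   [ker phi = A_j/A_i], and [j <= i] because [(tau - 1)^i] is killed; a
   nontrivial kernel forces [j < i].  The relation [sigma~^p = e (tau - 1)^(i-1)]
   puts [sigma~^p] in the kernel, while any lift [c sigma~] of [sigma] in
   [B_{j,e'}] has [(c sigma~)^p = c (1 + tau + ... + tau^(p-1)) + e' (tau - 1)^(j-1)]
   with [1 + tau + ... + tau^(p-1) = (tau - 1)^(p-1) = 0] modulo [(tau - 1)^j];
   so [e' = 0].  Conversely, reduction modulo [(tau - 1)^j] is a homomorphism
   [B_{i,e} -> B_{j,0}] since [(tau - 1)^(i-1)] vanishes there. *)

Set Implicit Arguments.
Unset Strict Implicit.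
Unset Printing Implicit Defensive.

Section PolyCongruence.
Variables (F : fieldType) (d : {poly F}).
Implicit Types a b c u v w : {poly F}.

Definition congp a b := d %| a - b.

Lemma congpE a b : congp a b = (a %% d == b %% d).
Proof. by rewrite /congp /dvdp modpD modpN subr_eq0. Qed.

Lemma congpxx a : congp a a.
Proof. by rewrite congpE. Qed.

Lemma congp_sym : symmetric congp.
Proof. by move=> a b; rewrite !congpE eq_sym. Qed.

Lemma congp_trans : transitive congp.
Proof. by move=> b a c; rewrite !congpE => /eqP-> /eqP->. Qed.

Lemma congp_modp a : congp (a %% d) a.
Proof. by rewrite congpE modp_id. Qed.

Lemma congp0 a : congp a 0 = (d %| a).
Proof. by rewrite /congp subr0. Qed.

Lemma congpD a b c w : congp a b -> congp c w -> congp (a + c) (b + w).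
Proof. by rewrite /congp opprD addrACA; apply: dvdp_add. Qed.

Lemma congp_add2l c a b : congp (c + a) (c + b) = congp a b.
Proof. by rewrite /congp opprD addrACA subrr add0r. Qed.

Lemma congp_add2r c a b : congp (a + c) (b + c) = congp a b.
Proof. by rewrite ![_ + c]addrC congp_add2l. Qed.

Lemma congpMl c a b : congp a b -> congp (c * a) (c * b).
Proof. by rewrite /congp -mulrBr; apply: dvdp_mull. Qed.

Lemma dvdp_cancel_invmod u v w : congp (v * u) 1 -> d %| w * u -> d %| w.
Proof.
move=> vu1 dwu; rewrite -congp0 -[w]mulr1; apply: (@congp_trans (w * (v * u))).
  by apply: congpMl; rewrite congp_sym.
by rewrite mulrCA -(mulr0 v); apply: congpMl; rewrite congp0.
Qed.

End PolyCongruence.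

Lemma congp_dvdp (F : fieldType) (d d' a b : {poly F}) :
  d' %| d -> congp d a b -> congp d' a b.
Proof. exact: dvdp_trans. Qed.

Lemma sum_expr_S (R : pzSemiRingType) (x : R) n :
  \sum_(m < n.+1) x ^+ m = 1 + x * \sum_(m < n) x ^+ m.
Proof.
by rewrite big_ord_recl expr0 mulr_sumr; congr (_ + _); apply: eq_bigr => m _; rewrite exprS.
Qed.

Lemma sum_Xpow_pchar (F : fieldType) (p : nat) : p \in [pchar F] ->
  \sum_(m < p) ('X^m : {poly F}) = ('X - 1) ^+ p.-1.
Proof.
move=> pF; have pP : p \in [pchar {poly F}] by rewrite pchar_poly.
have p_gt0 : (0 < p)%N by rewrite prime_gt0 // (pcharf_prime pF).
apply: (@mulfI _ ('X - 1)); first by rewrite -size_poly_eq0 -polyC1 size_XsubC.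
rewrite -subrX1 -exprS prednK // -!(pFrobenius_autE pP).
by rewrite pFrobenius_autB_comm ?pFrobenius_aut1 //; apply: commr1.
Qed.

Section ExtensionsOfG.
Variable p : nat.
Local Notation Q k := (('X - 1 : {poly 'F_p}) ^+ k).

Lemma size_Q k : size (Q k) = k.+1.
Proof. by rewrite -polyC1 size_exp_XsubC. Qed.

Lemma dvdp_Q j k : (Q j %| Q k) = (j <= k)%N.
Proof. by rewrite dvdp_Pexp2l // -polyC1 size_XsubC. Qed.

Lemma congp_toA k q : congp (Q k) (val (toA p k q)) q.
Proof. exact: congp_modp. Qed.

Lemma eq_toA k q1 q2 : (toA p k q1 == toA p k q2) = congp (Q k) q1 q2.
Proof. by rewrite -val_eqE congpE. Qed.

Lemma toA_eq0 k q : (toA p k q == toA p k 0) = (Q k %| q).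
Proof. by rewrite eq_toA congp0. Qed.

Lemma toA_val k (a : Arep p k) : toA p k (val a) = a.
Proof. by apply: val_inj; rewrite /= /modA modp_small // size_Q ltnS (valP a). Qed.

Lemma dvdp_Q_tw k e : (0 < k)%N -> (Q k %| tw p k e) = (e == 0).
Proof.
move=> k_gt0; rewrite /tw mul_polyC; have [-> | e_ne0] := eqVneq e 0.
  by rewrite scale0r dvdp0.
by rewrite dvdpZr // dvdp_Q -ltnS prednK // ltnn.
Qed.

Lemma dvdp_tw j k e : (j < k)%N -> Q j %| tw p k e.
Proof. by move=> lt_jk; rewrite /tw dvdp_mull // dvdp_Q -ltnS (ltn_predK lt_jk). Qed.

Lemma val_Zp1 : (1 : 'Z_p) = 1%N :> nat.
Proof. exact: modn_small. Qed.

Hypothesis p_gt1 : (1 < p)%N.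

Section ExtensionGroup.
Variables (k : nat) (e : 'F_p).
Local Notation toA := (toA p k).
Local Notation mulB := (mulB p k e).

Lemma mulB_toA q1 q2 (m n : 'Z_p) :
  mulB (toA q1, m) (toA q2, n) =
  (toA (q1 + 'X^m * q2 + (if (p <= m + n)%N then tw p k e else 0)), m + n).
Proof.
congr pair; apply/eqP; rewrite eq_toA.
by apply: congpD; rewrite ?congpxx //; apply: congpD; rewrite ?congpMl ?congp_toA.
Qed.

Lemma mulB_toA0 q1 q2 : mulB (toA q1, 0) (toA q2, 0) = (toA (q1 + q2), 0).
Proof. by rewrite mulB_toA leqNgt ltnW //= expr0 mul1r !addr0. Qed.

Lemma mulB_sigma c q :
  mulB (toA c, 1) (toA q, 0) = mulB (toA ('X * q), 0) (toA c, 1).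
Proof.
rewrite !mulB_toA val_Zp1 /= addn0 add0n leqNgt p_gt1 /= !addr0 add0r.
by rewrite expr1 expr0 mul1r addrC.
Qed.

Definition expB x n := iter n (mulB x) (oneB p k).

Lemma expB_sigma c n : (n < p)%N ->
  expB (toA c, 1) n = (toA (c * \sum_(m < n) 'X^m), n%:R).
Proof.
elim: n => [|n IHn] lt_np; first by rewrite /expB /= big_ord0 mulr0.
rewrite /expB iterS -/(expB _ n) IHn ?(ltnW lt_np) // mulB_toA.
rewrite val_Zp1 val_Zp_nat // modn_small ?(ltnW lt_np) // add1n leqNgt lt_np /=.
congr pair; last by rewrite -natr1 addrC.
by rewrite sum_expr_S expr1 addr0 mulrDr mulr1 mulrCA.
Qed.

Lemma expB_sigma_p c :
  expB (toA c, 1) p = (toA (c * \sum_(m < p) 'X^m + tw p k e), 0).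
Proof.
have p_gt0 : (0 < p)%N by apply: ltnW.
have -> : expB (toA c, 1) p = mulB (toA c, 1) (expB (toA c, 1) p.-1).
  by rewrite /expB -iterS prednK.
rewrite expB_sigma ?ltn_predL // mulB_toA val_Zp1 val_Zp_nat // modn_small ?ltn_predL //.
rewrite add1n prednK // leqnn; congr pair.
  have -> : \sum_(m < p) 'X^m = \sum_(m < p.-1.+1) 'X^m :> {poly 'F_p} by rewrite prednK.
  by rewrite sum_expr_S expr1 mulrDr mulr1 mulrCA.
by apply: ord_inj; rewrite nat1r prednK // val_Zp_nat // modnn.
Qed.

End ExtensionGroup.

Section HomomorphismOverG.
Variables (i j : nat) (e e' : 'F_p) (phi : Bgrp p i -> Bgrp p j).
Hypotheses (phi_hom : ghom p i j e e' phi) (phi_overG : overG p i j phi).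

Lemma phiE x : phi x = ((phi x).1, x.2).
Proof. by rewrite -phi_overG; case: (phi x). Qed.

Definition phiA q := val (phi (toA p i q, 0)).1.

Lemma phi_toA q : phi (toA p i q, 0) = (toA p j (phiA q), 0).
Proof. by rewrite phiE toA_val. Qed.

Lemma phiA_add q1 q2 : congp (Q j) (phiA (q1 + q2)) (phiA q1 + phiA q2).
Proof.
have := phi_hom (toA p i q1, 0) (toA p i q2, 0).
rewrite !mulB_toA0 !phi_toA mulB_toA0.
by move=> /(congr1 fst) /eqP; rewrite eq_toA.
Qed.

Lemma phiA0 : congp (Q j) (phiA 0) 0.
Proof. by have := phiA_add 0 0; rewrite addr0 -{1}[phiA 0]addr0 congp_add2l congp_sym. Qed.

Lemma phi1 : phi (oneB p i) = oneB p j.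
Proof. by rewrite phi_toA; congr pair; apply/eqP; rewrite eq_toA phiA0. Qed.

Lemma phi_sigma : exists c, phi (toA p i 0, 1) = (toA p j c, 1).
Proof. by exists (val (phi (toA p i 0, 1)).1); rewrite phiE toA_val. Qed.

Lemma phiA_X q : congp (Q j) (phiA ('X * q)) ('X * phiA q).
Proof.
have [c phi_sigma_c] := phi_sigma.
have := congr1 phi (mulB_sigma i e 0 q).
rewrite !phi_hom phi_sigma_c !phi_toA mulB_sigma !mulB_toA.
by move=> /(congr1 fst) /eqP; rewrite eq_toA congp_add2r congp_add2r congp_sym.
Qed.

Lemma phiA_natr n : congp (Q j) (phiA n%:R) (n%:R * phiA 1).
Proof.
elim: n => [|n IHn]; first by rewrite mul0r phiA0.
rewrite -natr1 mulrDl mul1r; apply: congp_trans (phiA_add _ _) _.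
by apply: congpD; rewrite ?congpxx.
Qed.

Lemma phiA_lin q : congp (Q j) (phiA q) (q * phiA 1).
Proof.
elim/poly_ind: q => [|q c IHq]; first by rewrite mul0r phiA0.
apply: congp_trans (phiA_add _ _) _; rewrite mulrDl; apply: congpD.
  rewrite mulrC; apply: congp_trans (phiA_X _) _; rewrite -mulrA; exact: congpMl.
by rewrite -[c]natr_Zp polyC_natr; apply: phiA_natr.
Qed.

Lemma phi_expB x n : phi (expB e x n) = expB e' (phi x) n.
Proof. by elim: n => [|n IHn]; rewrite ?phi1 // /expB !iterS phi_hom -!/(expB _ _ _) IHn. Qed.

Hypothesis phi_surj : surj phi.

Lemma phiA1_unit : exists v, congp (Q j) (v * phiA 1) 1.
Proof.
have [[a n] phi_x] := phi_surj (toA p j 1, 0).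
have n0 : n = 0 by rewrite -[n]/((a, n).2) -phi_overG phi_x.
move: (congr1 fst phi_x); rewrite -(toA_val a) n0 phi_toA => /eqP.
rewrite eq_toA => phiAa1; exists (val a).
by apply: congp_trans phiAa1; rewrite congp_sym phiA_lin.
Qed.

Lemma phi_toA_eq1 q : phi (toA p i q, 0) = oneB p j <-> Q j %| q.
Proof.
have [v v_inv] := phiA1_unit.
rewrite phi_toA; split => [/(congr1 fst) /eqP | Qq].
  rewrite eq_toA => phiAq0; apply: dvdp_cancel_invmod v_inv _.
  by rewrite -congp0; apply: congp_trans phiAq0; rewrite congp_sym phiA_lin.
congr pair; apply/eqP; rewrite eq_toA.
by apply: congp_trans (phiA_lin q) _; rewrite congp0 dvdp_mulr.
Qed.

Lemma ker_phi x : phi x = oneB p j <-> inAjAi p i j x.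
Proof.
case: x => a n; rewrite /inAjAi /=; have [-> | n_ne0] := eqVneq n 0.
  by rewrite -{1}(toA_val a); split=> [/phi_toA_eq1 | [_ /phi_toA_eq1]].
split=> [phi_x | [n0]]; last by rewrite n0 eqxx in n_ne0.
by case/eqP: n_ne0; rewrite -[n]/((a, n).2) -phi_overG phi_x.
Qed.

Lemma leq_ji : (j <= i)%N.
Proof.
rewrite -dvdp_Q; apply/phi_toA_eq1; rewrite -phi1.
by congr (phi (_, _)); apply/eqP; rewrite toA_eq0.
Qed.

Lemma ltn_ji : (exists x, x <> oneB p i /\ phi x = oneB p j) -> (j < i)%N.
Proof.
case=> -[a n] [x_ne1 /ker_phi [/= n0 Qa]]; rewrite ltn_neqAle leq_ji andbT.
apply/eqP => eq_ji; apply: x_ne1; rewrite n0 -(toA_val a); congr pair.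
by apply/eqP; rewrite toA_eq0; rewrite eq_ji in Qa.
Qed.

Lemma twist_eq0 : prime p -> (0 < j)%N -> (j < i)%N -> (i <= p)%N -> e' = 0.
Proof.
move=> p_prime j_gt0 lt_ji le_ip.
have: phi (expB e (toA p i 0, 1) p) = oneB p j.
  by rewrite expB_sigma_p mul0r add0r; apply/phi_toA_eq1; apply: dvdp_tw.
have [c phi_sigma_c] := phi_sigma.
rewrite phi_expB phi_sigma_c expB_sigma_p => /(congr1 fst) /eqP.
rewrite toA_eq0 dvdp_addr ?dvdp_Q_tw // => [/eqP //|].
rewrite sum_Xpow_pchar ?pchar_Fp // dvdp_mull // dvdp_Q -ltnS prednK ?prime_gt0 //.
exact: leq_trans lt_ji le_ip.
Qed.

End HomomorphismOverG.

Section QuotientMap.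
Variables (i j : nat) (e : 'F_p).

Definition projB (x : Bgrp p i) : Bgrp p j := (toA p j (val x.1), x.2).

Lemma projB_hom : (j < i)%N -> ghom p i j e 0 projB.
Proof.
move=> lt_ji [a m] [b n]; rewrite /projB -{1}(toA_val a) -{1}(toA_val b) !mulB_toA /=.
congr pair; apply/eqP; rewrite eq_toA.
apply: congp_trans (congp_dvdp _ (congp_toA _ _)) _; first by rewrite dvdp_Q ltnW.
rewrite congp_add2l; case: ifP => _; rewrite ?congpxx //.
by rewrite /tw polyC0 mul0r congp0 dvdp_tw.
Qed.

Lemma projB_surj : (j <= i)%N -> surj projB.
Proof.
move=> le_ji [b n]; exists (toA p i (val b), n); congr pair.
rewrite -[RHS]toA_val; apply/eqP; rewrite eq_toA.
by apply: congp_dvdp (congp_toA _ _); rewrite dvdp_Q.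
Qed.

Lemma ker_projB x : projB x = oneB p j <-> inAjAi p i j x.
Proof.
case: x => a n; rewrite /projB /oneB /inAjAi /=.
split=> [proj_x | [-> Qa]]; last by congr pair; apply/eqP; rewrite toA_eq0.
by split; [move/(congr1 snd): proj_x | rewrite -toA_eq0; move/(congr1 fst): proj_x => /= ->].
Qed.

End QuotientMap.

End ExtensionsOfG.

Theorem lemma2 (p : nat) (p_prime : prime p) (p_odd : odd p) :
  (forall (i j : nat) (e e' : 'F_p) (phi : Bgrp p i -> Bgrp p j),
      (1 <= i <= p)%N -> (1 <= j <= p)%N ->
      ghom p i j e e' phi -> surj phi -> overG p i j phi ->
      (exists x, x <> oneB p i /\ phi x = oneB p j) ->
      [/\ (j < i)%N, e' = 0 &
          forall x, phi x = oneB p j <-> inAjAi p i j x])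
  /\
  (forall (i j : nat) (e : 'F_p), (1 <= j)%N -> (j < i)%N -> (i <= p)%N ->
      exists phi : Bgrp p i -> Bgrp p j,
        [/\ ghom p i j e 0 phi, surj phi, overG p i j phi &
            forall x, phi x = oneB p j <-> inAjAi p i j x]).
Proof.
have p_gt1 := prime_gt1 p_prime.
split=> [i j e e' phi /andP[_ le_ip] /andP[j_gt0 _] hom surj_phi overG_phi ker_ne1 |].
  have lt_ji := ltn_ji p_gt1 hom overG_phi surj_phi ker_ne1.
  split=> //; first exact: (twist_eq0 p_gt1 hom overG_phi surj_phi p_prime j_gt0 lt_ji le_ip).
  exact: ker_phi.
move=> i j e _ lt_ji _; exists (@projB p i j).
by split; [exact: projB_hom | exact: projB_surj (ltnW lt_ji) | by [] | exact: ker_projB].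
Qed.
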